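(* Consider graph-based ANM with symmetric altruism where the $g_i$ are USL with common slope $\beta>0$, each modification adds/removes a single undirected edge, and an arbitrary target profile $x^*$ with $I=\{i: x^*_i=1\}$. Define $t_i=c_i-\big(g_i(1,n_i)-g_i(0,n_i)\big)$ (with $n_i$ evaluated at $x^*$). Construct the undirected graph $F^0=(V,E_F^0)$ with $\{i,j\}\in E_F^0$ iff $j\in N_H(i)\cap N_{G^0}(i)$; define degree sets $D_i=\{\lceil t_i/(a\beta)\rceil,\dots,n-1\}$ for $i\in I$ and $D_i=\{0,\dots,\lfloor t_i/(a\beta)\rfloor\}$ for $i\notin I$; define pair costs $c'_{ij}=c_{ij}$ if $\{i,j\}\in E_F^0$ or $\{i,j\}\in E_H$, and $c'_{ij}=+\infty$ otherwise. Then the minimum cost of modifying $G^0$ into an undirected graph $G$ such that $x^*$ is a PSNE of the game with altruism graph $G$ equals the minimum cost of modifying $F^0$ (adding/removing edges, where each pair $\{i,j\}$ in the symmetric difference costs $c'_{ij}$) into a graph $F$ such that $\deg_F(i)\in D_i$ for all $i\in V$.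
   Context: Binary networked public goods game (BNPG): a simple undirected loop-free graph $H=(V,E_H)$ on agents $V=\{1,\dots,n\}$; each agent $i$ chooses $x_i\in\{0,1\}$ ($1$ = invest). For a profile $x$, $n_i=\sum_{j\in N_H(i)}x_j$, where $N_H(i)$ is the set of neighbors of $i$ in $H$. Each agent has a function $g_i(x_i,n_i)\ge 0$, non-decreasing in both arguments, and an investment cost $c_i$. Given an altruism matrix $\alpha=(\alpha_{ij})$, the utility of agent $i$ is $u_i(x)=g_i(x_i,n_i)-c_ix_i+\sum_{j\in N_H(i)}\alpha_{ij}\,g_j(x_j,n_j)$. A profile $x$ is a pure-strategy Nash equilibrium (PSNE) if no agent can strictly increase its utility by unilaterally switching its action. Graph-based altruism: given an altruism graph $G$ on $V$ and a constant $a>0$, $\alpha_{ii}=1$, $\alpha_{ij}=a$ if $(i,j)$ is an edge of $G$, and $\alpha_{ij}=0$ otherwise; ''symmetric altruism'' means $G$ is undirected (an edge $\{i,j\}$ sets both $\alpha_{ij}=\alpha_{ji}=a$). $N_G(i)$ denotes the neighbor set of $i$ in $G$. Graph-based Altruism Network Modification (ANM): given $H$, the $g_i$, $c_i$, $a$, an initial altruism graph $G^0$, a target profile $x^*\in\{0,1\}^n$, and a cost $c_{ij}\ge 0$ for each undirected node pair — the cost of removing the edge if it is in $G^0$, and of adding it otherwise — find a graph $G$ obtained from $G^0$ by adding/removing edges, minimizing the total cost of the pairs in the symmetric difference of the edge sets of $G^0$ and $G$, such that $x^*$ is a PSNE of the game with altruism graph $G$. USL (uniform separable linear): every $g_i$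 has the form $g_i(x_i,n_i)=h_i(x_i)+\beta n_i$ for some function $h_i$ and a constant $\beta$ common to all agents. *)

From HB Require Import structures.
From mathcomp Require Import all_boot all_order all_algebra.
From mathcomp Require Import reals constructive_ereal.
Set Implicit Arguments. Unset Strict Implicit. Unset Printing Implicit Defensive.
Import Order.TTheory GRing.Theory Num.Theory.
Local Open Scope ring_scope.

(* Agents are V = 'I_n.  An undirected loop-free (simple) graph on V is a set
   of unordered pairs {i,j}, i.e. of 2-element subsets of V. *)
Definition graph (n : nat) := {set {set 'I_n}}.

Definition simple_graph n (E : graph n) : bool := [forall e in E, #|e| == 2].

Definition nbhd n (E : graph n) (i : 'I_n) : {set 'I_n} :=
  [set j | [set i; j] \in E].

Definition deg n (E : graph n) (i : 'I_n) : nat := #|nbhd E i|.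

Definition symdiff n (E1 E2 : graph n) : graph n := (E1 :\: E2) :|: (E2 :\: E1).

Section Game.
Variables (R : realType) (n : nat).

(* profiles: x i = true means agent i invests (x_i = 1) *)
Definition profile := 'I_n -> bool.

Definition ninv (H : graph n) (x : profile) (i : 'I_n) : nat :=
  #|[set j in nbhd H i | x j]|.

Definition b2R (b : bool) : R := if b then 1 else 0.

Definition utility (H : graph n) (g : 'I_n -> bool -> nat -> R) (c : 'I_n -> R)
  (alpha : 'I_n -> 'I_n -> R) (x : profile) (i : 'I_n) : R :=
  g i (x i) (ninv H x i) - c i * b2R (x i)
  + \sum_(j in nbhd H i) alpha i j * g j (x j) (ninv H x j).

Definition flip (x : profile) (i : 'I_n) : profile :=
  fun j => if j == i then ~~ x i else x j.

Definition PSNE (H : graph n) g c alpha (x : profile) : bool :=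
  [forall i : 'I_n, ~~ (utility H g c alpha x i < utility H g c alpha (flip x i) i)].

Definition alphaG (a : R) (G : graph n) (i j : 'I_n) : R :=
  if i == j then 1 else if [set i; j] \in G then a else 0.

Definition USL (g : 'I_n -> bool -> nat -> R) (beta : R) : Prop :=
  exists h : 'I_n -> bool -> R, forall i x k, g i x k = h i x + beta * k%:R.

Definition valid_g (g : 'I_n -> bool -> nat -> R) : Prop :=
  (forall i x k, 0 <= g i x k) /\
  (forall i k, g i false k <= g i true k) /\
  (forall i x k l, (k <= l)%N -> g i x k <= g i x l).

Definition mod_cost (cost : {set 'I_n} -> \bar R) (E0 E : graph n) : \bar R :=
  (\sum_(e in symdiff E0 E) cost e)%E.

Definition min_cost (P : graph n -> bool) (f : graph n -> \bar R) : \bar R :=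
  \big[Order.min/+oo%E]_(E : graph n | simple_graph E && P E) f E.

Definition ANM_opt (H : graph n) g c (a : R) (G0 : graph n)
  (xs : profile) (cst : {set 'I_n} -> R) : \bar R :=
  min_cost (fun G => PSNE H g c (alphaG a G) xs)
           (mod_cost (fun e => (cst e)%:E) G0).

Definition tval (g : 'I_n -> bool -> nat -> R) (c : 'I_n -> R) (H : graph n)
  (xs : profile) (i : 'I_n) : R :=
  c i - (g i true (ninv H xs i) - g i false (ninv H xs i)).

Definition Dset (xs : profile) (t : 'I_n -> R) (a beta : R) (i : 'I_n) (d : nat) : bool :=
  if xs i then (Num.ceil (t i / (a * beta)) <= d%:Z) && (d <= n.-1)%N
  else (0 <= d)%N && (d%:Z <= Num.floor (t i / (a * beta))).

Definition F0 (H G0 : graph n) : graph n :=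
  [set e : {set 'I_n} | [exists i, exists j,
     (e == [set i; j]) && (j \in nbhd H i :&: nbhd G0 i)]].

Definition cprime (H G0 : graph n) (cst : {set 'I_n} -> R) (e : {set 'I_n}) : \bar R :=
  if (e \in F0 H G0) || (e \in H) then (cst e)%:E else +oo%E.

Definition DEG_opt (H : graph n) g c (a beta : R) (G0 : graph n)
  (xs : profile) (cst : {set 'I_n} -> R) : \bar R :=
  min_cost (fun F => [forall i, Dset xs (tval g c H xs) a beta i (deg F i)])
           (mod_cost (cprime H G0 cst) (F0 H G0)).

End Game.

From Pilot Require Import Defs.
From HB Require Import structures.
From mathcomp Require Import all_boot all_order all_algebra.
From mathcomp Require Import reals constructive_ereal ring.
Import Order.TTheory GRing.Theory Num.Theory.
Local Open Scope ring_scope.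
Set Implicit Arguments.

(* Under USL, switching agent i's action changes its utility by
     (+/-) (a * beta * |N_H(i) :&: N_G(i)| - t_i),
   because only the H-neighbours of i see their n_j shift by one, and they are
   weighted by a exactly when they are also G-neighbours.  Hence x* is a PSNE
   for the altruism graph G iff, for every i, the degree of i in H :&: G lies in
   D_i ([psne_iff_deg]).
   So only the H-edges of G matter, and indeed F0 = G0 :&: H.
   - Any feasible G yields the feasible F = G :&: H, whose cost (only pairs of
     H are paid) is at most that of G, costs being nonnegative.
   - Any feasible F of finite cost lies inside H, and G = F :|: (G0 :\: H) is
     feasible with exactly the same cost; F outside H costs +oo. *)

Section GraphFacts.
Variable n : nat.
Implicit Types (E A B C F : graph n) (i j : 'I_n).

Lemma nbhd_nin E i : simple_graph E -> i \notin nbhd E i.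
Proof.
move=> /forallP sE; rewrite inE setUid; apply/negP => hi.
by move: (sE [set i]); rewrite hi /= cards1.
Qed.

Lemma nbhd_sym E i j : (j \in nbhd E i) = (i \in nbhd E j).
Proof. by rewrite !inE setUC. Qed.

Lemma nbhd_setI A B i : nbhd (A :&: B) i = nbhd A i :&: nbhd B i.
Proof. by apply/setP => j; rewrite !inE. Qed.

Lemma deg_simple_le E i : simple_graph E -> (deg E i <= n.-1)%N.
Proof.
move=> sE; rewrite /deg -[n in n.-1]card_ord -(cardsC1 i); apply: subset_leq_card.
apply/subsetP => j hj; rewrite in_setC1.
by apply/eqP => ji; move: hj (nbhd_nin E i sE); rewrite ji => ->.
Qed.

Lemma simple_graph_sub A B : A \subset B -> simple_graph B -> simple_graph A.
Proof.
move=> /subsetP AB /forallP sB; apply/forallP => e; apply/implyP => eA.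
by move/implyP: (sB e); apply; apply: AB.
Qed.

Lemma simple_graph_U A B :
  simple_graph A -> simple_graph B -> simple_graph (A :|: B).
Proof.
move=> /forallP sA /forallP sB; apply/forallP => e; apply/implyP; rewrite in_setU.
by case/orP => he; [move/implyP: (sA e) | move/implyP: (sB e)]; apply.
Qed.

Lemma F0_eq (H G0 : graph n) : simple_graph H -> F0 H G0 = G0 :&: H.
Proof.
move=> sH; apply/setP => e; rewrite inE in_setI; apply/existsP/idP.
  case=> i /existsP [j /andP[/eqP -> ]]; rewrite in_setI !inE => /andP[hH hG].
  by rewrite hH hG.
move=> /andP[hG hH].
have : #|e| == 2 by move/forallP: sH => /(_ e) /implyP; apply.
case/cards2P => i [j [_ ee]]; exists i; apply/existsP; exists j.
by rewrite ee eqxx in_setI !inE -ee hH hG.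
Qed.

Lemma symdiff_setI A B C : symdiff (A :&: C) (B :&: C) = symdiff A B :&: C.
Proof. by apply/setP => e; rewrite !inE; case: (e \in C); rewrite ?andbT ?andbF. Qed.

Lemma symdiff_extend A C F :
  F \subset C -> symdiff A (F :|: (A :\: C)) = symdiff (A :&: C) F.
Proof.
move=> /subsetP FC; apply/setP => e; rewrite !inE; move: (FC e).
by case: (e \in F); case: (e \in C); case: (e \in A) => //= /(_ isT).
Qed.

End GraphFacts.

Section Deviation.
Variables (R : realType) (n : nat) (H : graph n).
Hypothesis sH : simple_graph H.

Lemma ninv_flip_self (x : profile n) i : ninv H (flip x i) i = ninv H x i.
Proof.
rewrite /ninv; apply: eq_card => k; rewrite !inE /flip.
case: eqP => // ->; have := nbhd_nin H i sH.
by rewrite inE => /negbTE ->.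
Qed.

Lemma ninv_flip (x : profile n) i j : j \in nbhd H i ->
  ((ninv H (flip x i) j)%:R : R) =
  (ninv H x j)%:R + (b2R R (~~ x i) - b2R R (x i)).
Proof.
move=> hj; have hi : i \in nbhd H j by rewrite -nbhd_sym.
rewrite /ninv (cardsD1 i [set k in nbhd H j | flip x i k]).
rewrite (cardsD1 i [set k in nbhd H j | x k]).
have -> : [set k in nbhd H j | flip x i k] :\ i = [set k in nbhd H j | x k] :\ i.
  by apply/setP => k; rewrite !inE /flip; case: eqP.
move: hi; rewrite !inE /flip eqxx => -> /=; rewrite !natrD.
by case: (x i); rewrite /b2R /=; ring.
Qed.

Lemma sum_alphaG (G : graph n) (a : R) i :
  \sum_(j in nbhd H i) alphaG a G i j = a * (deg (H :&: G) i)%:R.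
Proof.
rewrite (eq_bigr (fun j => if j \in nbhd G i then a else 0)); last first.
  move=> j hj; rewrite /alphaG inE.
  by case: eqP => // ej; move: hj (nbhd_nin H i sH); rewrite -ej => ->.
rewrite -big_mkcondr /= (eq_bigl (fun j => j \in nbhd (H :&: G) i)); last first.
  by move=> j; rewrite nbhd_setI in_setI.
by rewrite sumr_const mulr_natr.
Qed.

Lemma deviation_gain (G : graph n) g c (a beta : R) (x : profile n) i :
  USL g beta ->
  utility H g c (alphaG a G) (flip x i) i - utility H g c (alphaG a G) x i =
  (b2R R (~~ x i) - b2R R (x i)) *
    (a * beta * (deg (H :&: G) i)%:R - Defs.tval g c H x i).
Proof.
move=> [h Hh].
have neighbours_gain :
    \sum_(j in nbhd H i) alphaG a G i j * g j (flip x i j) (ninv H (flip x i) j)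
  = \sum_(j in nbhd H i) alphaG a G i j * g j (x j) (ninv H x j)
    + \sum_(j in nbhd H i) alphaG a G i j * (beta * (b2R R (~~ x i) - b2R R (x i))).
  rewrite -big_split /=; apply: eq_bigr => j hj.
  have ji : (j == i) = false.
    by apply/negbTE/eqP => ej; move: hj (nbhd_nin H i sH); rewrite ej => ->.
  by rewrite /flip ji !Hh (ninv_flip x hj); ring.
rewrite /utility neighbours_gain -big_distrl /= sum_alphaG /Defs.tval !Hh.
rewrite ninv_flip_self /flip eqxx.
by case: (x i); rewrite /b2R /=; ring.
Qed.

Lemma psne_iff_deg (G : graph n) g c (a beta : R) (x : profile n) :
  USL g beta -> 0 < a -> 0 < beta ->
  PSNE H g c (alphaG a G) x =
  [forall i, Dset x (Defs.tval g c H x) a beta i (deg (H :&: G) i)].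
Proof.
move=> U a0 b0; apply: eq_forallb => i.
rewrite -leNgt -subr_le0 (deviation_gain G c a x i U).
have ab : 0 < a * beta by rewrite mulr_gt0.
have degH := deg_simple_le _ i (simple_graph_sub (subsetIl H G) sH).
rewrite /Dset; case: (x i); rewrite /b2R /=.
  rewrite ceil_le_int ler_pdivrMr // degH andbT sub0r mulN1r oppr_le0 subr_ge0.
  by rewrite [_ * (a * beta)]mulrC.
rewrite floor_ge_int ler_pdivlMr // subr0 mul1r subr_le0.
by rewrite [_ * (a * beta)]mulrC.
Qed.

End Deviation.

Section Costs.
Variables (R : realType) (n : nat) (H G0 : graph n) (cst : {set 'I_n} -> R).
Hypothesis sH : simple_graph H.

Lemma cprime_in e : e \in H -> cprime H G0 cst e = (cst e)%:E.
Proof. by rewrite /cprime => ->; rewrite orbT. Qed.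

Lemma cprime_out e : e \notin H -> cprime H G0 cst e = +oo%E.
Proof. by rewrite /cprime F0_eq // in_setI => /negbTE ->; rewrite andbF. Qed.

Lemma mod_cost_outside (F : graph n) :
  ~~ (F \subset H) -> mod_cost (cprime H G0 cst) (F0 H G0) F = +oo%E.
Proof.
case/subsetPn => e eF eH; apply/eqP; rewrite /mod_cost esum_eqy.
  apply/existsP; exists e; rewrite cprime_out // eqxx andbT F0_eq //.
  by rewrite !inE eF (negbTE eH) !andbF.
by move=> e' _; rewrite /cprime; case: ifP.
Qed.

Lemma mod_cost_extend (F : graph n) : F \subset H ->
  mod_cost (fun e => (cst e)%:E) G0 (F :|: (G0 :\: H)) =
  mod_cost (cprime H G0 cst) (F0 H G0) F.
Proof.
move=> FH; rewrite /mod_cost symdiff_extend // F0_eq //.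
apply: eq_bigr => e; rewrite -(symdiff_extend G0 FH) => hd.
rewrite cprime_in //; move: hd; rewrite !inE; move/subsetP: FH => /(_ e).
by case: (e \in F); case: (e \in H); case: (e \in G0) => // /(_ isT).
Qed.

Lemma mod_cost_restrict (G : graph n) : (forall e, 0 <= cst e) ->
  (mod_cost (cprime H G0 cst) (F0 H G0) (G :&: H) <=
   mod_cost (fun e => (cst e)%:E) G0 G)%E.
Proof.
move=> cst0; rewrite /mod_cost F0_eq // symdiff_setI.
rewrite (eq_bigr (fun e => (cst e)%:E)); last first.
  by move=> e; rewrite in_setI => /andP[_ /cprime_in].
rewrite !sumEFin lee_fin [X in _ <= X](big_setID H) /= lerDl.
exact: sumr_ge0.
Qed.

End Costs.

Lemma min_cost_inf (R : realType) n (P : graph n -> bool)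
  (f : graph n -> \bar R) (E : graph n) :
  simple_graph E -> P E -> (min_cost P f <= f E)%E.
Proof. by move=> sE PE; apply: (bigmin_inf E) => /=; rewrite ?sE. Qed.

Lemma min_cost_le (R : realType) n (P Q : graph n -> bool)
  (f g : graph n -> \bar R) :
  (forall E, simple_graph E -> P E -> (min_cost Q g <= f E)%E) ->
  (min_cost Q g <= min_cost P f)%E.
Proof. by move=> hE; apply: le_bigmin => [|E /andP[]]; [exact: leey | exact: hE]. Qed.

Theorem theorem5 (R : realType) (n : nat)
  (H : graph n) (g : 'I_n -> bool -> nat -> R) (c : 'I_n -> R)
  (a beta : R) (G0 : graph n) (xs : profile n) (cst : {set 'I_n} -> R) :
  simple_graph H -> simple_graph G0 ->
  valid_g g -> 0 < beta -> USL g beta -> 0 < a ->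
  (forall e, 0 <= cst e) ->
  ANM_opt H g c a G0 xs cst = DEG_opt H g c a beta G0 xs cst.
Proof.
move=> sH sG0 _ b0 U a0 cst0; rewrite /ANM_opt /DEG_opt.
have psne G := psne_iff_deg H sH G c a xs U a0 b0.
apply/le_anti/andP; split; apply: min_cost_le => E sE feasE.
- (* a feasible F inside H lifts to G = F :|: (G0 :\: H) at equal cost *)
  have [FH|FnH] := boolP (E \subset H); last by rewrite mod_cost_outside ?leey.
  rewrite -mod_cost_extend //; apply: min_cost_inf.
    by rewrite simple_graph_U // (simple_graph_sub (subsetDl G0 H)).
  rewrite psne (_ : H :&: (E :|: (G0 :\: H)) = E) //.
  by apply/setP => e; rewrite !inE; move/subsetP: FH => /(_ e);
     case: (e \in E); case: (e \in H) => // /(_ isT).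
- (* a feasible G restricts to F = G :&: H at no larger cost *)
  apply: le_trans (mod_cost_restrict _ H G0 cst sH E cst0).
  apply: min_cost_inf; first exact: simple_graph_sub (subsetIl E H) sE.
  by rewrite setIC -psne; exact: feasE.
Qed.
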